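(* Let $V$ be a real vector space of odd finite dimension, $G\le\mathrm{GL}(V)$ a finite group such that $V$ is a non-trivial irreducible $\mathbb{R}G$-module and $-\mathrm{id}_V\notin G$, and let $n\in N_{\mathrm{GL}(V)}(G)$ have finite order, with $\nu=\mathrm{ad}_n$. Suppose there is $g\in G$ such that $\alpha:=\mathrm{ad}_g\circ\nu\in\mathrm{Aut}(G)$ has even order and $$\dim(V)>(|\alpha|-1)\,|C_G(\alpha')|^{1/2}$$ for every $\alpha'\in\langle\alpha\rangle$ of prime order. Then the triple $(G,V,n)$ has the $E1$-property, i.e. there is $h\in G$ such that $hn$ has eigenvalue $1$.
   Context: For $x\in N_{\mathrm{GL}(V)}(G)$, $\mathrm{ad}_x\in\mathrm{Aut}(G)$ denotes conjugation $y\mapsto xyx^{-1}$. For $\beta\in\mathrm{Aut}(G)$, $C_G(\beta)=\{y\in G\mid\beta(y)=y\}$, and $|\alpha|$ denotes the order of $\alpha$. *)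

From HB Require Import structures.
From mathcomp Require Import all_boot all_order all_algebra all_fingroup.
From mathcomp Require Import mxrepresentation.
From mathcomp Require Import reals.
Set Implicit Arguments. Unset Strict Implicit. Unset Printing Implicit Defensive.
Import Order.TTheory GRing.Theory Num.Theory.
Local Open Scope ring_scope.

Section Defs.
Variables (R : fieldType) (gT : finGroupType) (G : {group gT}) (d : nat).
Variable rG : mx_representation R G d.

Definition ad_is_id (x : 'M[R]_d) : bool :=
  [forall y in G, x *m rG y *m invmx x == rG y].

Definition ad_order_is (x : 'M[R]_d) (k : nat) : Prop :=
  (0 < k)%N /\ ad_is_id (x ^+ k) /\
  (forall j : nat, (0 < j)%N -> (j < k)%N -> ~~ ad_is_id (x ^+ j)).

Definition ad_centraliser (x : 'M[R]_d) : {set gT} :=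
  [set y in G | x *m rG y *m invmx x == rG y].
End Defs.

From HB Require Import structures.
From mathcomp Require Import all_boot all_order all_algebra all_fingroup.
From mathcomp Require Import mxrepresentation.
From mathcomp Require Import reals polyrcf zify lra.
Import Order.TTheory GRing.Theory Num.Theory.
Set Implicit Arguments. Unset Strict Implicit. Unset Printing Implicit Defensive.
Local Open Scope ring_scope.

(* Write s := rG g * n, so that ad_s = alpha has order k. Then s^k centralises
   rG(G), hence is scalar by Schur's lemma (real matrices of odd size have a real
   eigenvalue), and determinants force s^k = 1. Averaging Gram matrices over G and
   the powers of s gives a positive definite form preserved by every rG h * s^i,
   so these matrices A satisfy tr(A^-1) = tr A. Combined with Schur orthogonality
   sum_h tr(rG h u) tr((rG h u)^-1) = |G| and a count of the fibres of the
   conjugation action, this gives tr(s^i)^2 <= |C_G(ad_(s^i))|. For 0 < i < k some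
   power s^(i e) induces an automorphism of prime order whose centraliser contains
   that of s^i, so the hypothesis yields (k - 1) tr(s^i) > - dim V. Hence
   tr(1 + s + ... + s^(k-1)) > 0, and this nonzero matrix is killed by s - 1. *)

Lemma prime_order_multiple (k i : nat) : (0 < i < k)%N ->
  exists e p, prime p /\ forall j, (k %| i * e * j)%N = (p %| j)%N.
Proof.
case/andP=> i_gt0 lt_ik; set d := gcdn i k.
have d_gt0 : (0 < d)%N by rewrite gcdn_gt0 i_gt0.
have Di : i = (i %/ d * d)%N by rewrite divnK ?dvdn_gcdl.
have Dk : k = (k %/ d * d)%N by rewrite divnK ?dvdn_gcdr.
have cop : coprime (i %/ d) (k %/ d).
  by rewrite /coprime -(eqn_pmul2r d_gt0) muln_gcdl -Di -Dk mul1n.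
have k'_gt1 : (1 < k %/ d)%N.
  rewrite ltnNge; apply/negP => le_k'1.
  have := dvdn_leq i_gt0 (dvdn_gcdl i k); rewrite -/d; nia.
set p := pdiv (k %/ d); set e := (k %/ d %/ p)%N.
have De : (k %/ d = e * p)%N by rewrite divnK ?pdiv_dvd.
exists e, p; split=> [|j]; first exact: pdiv_prime.
have e_gt0 : (0 < e)%N by rewrite lt0n; apply: contraTneq k'_gt1 => e0; rewrite De e0.
have -> : (i * e * j = d * e * (i %/ d * j))%N by rewrite {1}Di; lia.
have -> : k = (d * e * p)%N by rewrite Dk De; lia.
rewrite dvdn_pmul2l ?muln_gt0 ?d_gt0 // Gauss_dvdr //.
by rewrite coprime_sym (coprime_dvdr (pdiv_dvd _)) // coprime_sym.
Qed.

Lemma real_unity_root_sqr (R : realDomainType) (x : R) e :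
  (0 < e)%N -> x ^+ e = 1 -> x ^+ 2 = 1.
Proof.
move=> e_gt0 xe1; apply/eqP; rewrite sqr_norm_eq1 -(pexpr_eq1 e_gt0) //.
by rewrite -normrX xe1 normr1.
Qed.

Lemma odd_real_unity_root (R : realDomainType) (x : R) e :
  odd e -> x ^+ e = 1 -> x = 1.
Proof.
move=> odd_e xe1; have e_gt0 : (0 < e)%N by case: e odd_e {xe1}.
have /eqP := real_unity_root_sqr e_gt0 xe1.
rewrite sqrf_eq1 => /orP[/eqP // | /eqP x_1].
by move: xe1; rewrite x_1 -signr_odd odd_e expr1 => /eqP; rewrite eqNr oner_eq0.
Qed.

Lemma detX (R : comNzRingType) n (A : 'M[R]_n.+1) e : \det (A ^+ e) = \det A ^+ e.
Proof. by elim: e => [|e IHe]; rewrite ?det1 // !exprS -IHe; apply: detM. Qed.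

Lemma det_sqr_finite_order (R : realDomainType) n (A : 'M[R]_n.+1) e :
  (0 < e)%N -> A ^+ e = 1 -> \det A ^+ 2 = 1.
Proof. by move=> e_gt0 Ae1; apply: (real_unity_root_sqr e_gt0); rewrite -detX Ae1 det1. Qed.

Lemma odd_dim_eigenvalue (R : rcfType) n (A : 'M[R]_n) :
  odd n -> exists a, eigenvalue A a.
Proof.
move=> odd_n; have [|a] := @odd_poly_root R (char_poly A).
  by rewrite size_char_poly /= negbK.
by exists a; rewrite eigenvalue_root_char.
Qed.

Lemma sum_exp_eigenvalue1 (F : fieldType) n (A : 'M[F]_n.+1) k :
  A ^+ k = 1 -> \sum_(i < k) A ^+ i != 0 -> eigenvalue A 1.
Proof.
move=> Ak1; apply: contraNneq => ker0; rewrite -submx0 -[X in (_ <= X)%MS]ker0.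
apply/sub_kermxP; rewrite mulmxE.
have cAP : GRing.comm (A - 1%:M) (\sum_(i < k) A ^+ i).
  by apply: commr_sum => i _; apply/commrX/commr_sym/commrB/commr1.
by rewrite -cAP -[1%:M]/(1 : 'M_n.+1) -subrX1 Ak1 subrr.
Qed.

Lemma sum_gt0_of_lower_bound (R : numDomainType) (t : nat -> R) k :
  (1 < k)%N -> (forall i, (0 < i < k)%N -> - t 0%N < (k.-1)%:R * t i) ->
  0 < \sum_(i < k) t i.
Proof.
case: k => [|k] // k_gt1 t_lb; rewrite /= in t_lb.
have {}t_lb i : (0 < i < k.+1)%N -> 0 < t 0%N + k%:R * t i.
  by move/t_lb; rewrite -subr_gt0 opprK addrC.
have k_gt0 : 0 < k%:R :> R by rewrite ltr0n.
rewrite -(pmulr_rgt0 _ k_gt0) big_ord_recl mulrDr mulr_sumr.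
have -> : k%:R * t 0%N = \sum_(i < k) t 0%N by rewrite sumr_const card_ord mulr_natl.
rewrite -big_split /=; case: k k_gt1 k_gt0 t_lb => [|k] // _ _ t_lb.
rewrite big_ord_recl ltr_pwDl ?t_lb ?sumr_ge0 // => i _.
by rewrite ltW ?t_lb // /bump /= !add1n !ltnS.
Qed.

Lemma gram_mulr (R : comNzRingType) n (C X : 'M[R]_n.+1) :
  X^T * (C^T * C) * X = (C * X)^T * (C * X).
Proof. by rewrite -!mulmxE trmx_mul !mulmxA. Qed.

Lemma gram_sum_unit (R : realFieldType) n (I : finType) (P : pred I)
    (f : I -> 'M[R]_n) i0 :
  P i0 -> f i0 \in unitmx -> \sum_(i | P i) (f i)^T *m f i \in unitmx.
Proof.
move=> Pi0 f_unit; rewrite unitmxE unitfE; apply/negP => /det0P[v nz_v vS].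
have sqr_norm (w : 'cV[R]_n) : (w^T *m w) 0 0 = \sum_a w a 0 ^+ 2.
  by rewrite mxE; apply: eq_bigr => a _; rewrite mxE expr2.
have sqr_norm_ge0 (w : 'cV[R]_n) : 0 <= (w^T *m w) 0 0.
  by rewrite sqr_norm sumr_ge0 // => a _; rewrite sqr_ge0.
have : \sum_(i | P i) ((f i *m v^T)^T *m (f i *m v^T)) 0 0 = 0.
  transitivity ((v *m (\sum_(i | P i) (f i)^T *m f i) *m v^T) 0 0).
    rewrite mulmx_sumr mulmx_suml summxE; apply: eq_bigr => i _.
    by rewrite trmx_mul trmxK !mulmxA.
  by rewrite vS mul0mx mxE.
move/(psumr_eq0P (fun i _ => sqr_norm_ge0 _))/(_ i0 Pi0); rewrite sqr_norm.
move/(psumr_eq0P (fun a _ => sqr_ge0 _)) => fv0.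
have fv : f i0 *m v^T = 0.
  by apply/matrixP => a j; rewrite ord1 [RHS]mxE; apply/eqP; rewrite -sqrf_eq0 fv0.
by move: nz_v; rewrite -trmx_eq0 -(mulKmx f_unit v^T) fv mulmx0 eqxx.
Qed.

Lemma mxtrace_conj (R : comUnitRingType) n (P X : 'M[R]_n.+1) :
  P \is a GRing.unit -> \tr (P * X * P^-1) = \tr X.
Proof.
by move=> P_unit; have := mxtrace_mulC (P * X) P^-1; rewrite !mulmxE mulKr // => ->.
Qed.

Lemma form_invariant_mxtraceV (R : comUnitRingType) n (S A : 'M[R]_n.+1) :
  S \is a GRing.unit -> A^T * S * A = S -> \tr A^-1 = \tr A.
Proof.
move=> S_unit SA.
have VA : S^-1 * A^T * S * A = 1 by rewrite -!mulrA [A^T * _]mulrA SA mulVr.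
have A_unit : A \is a GRing.unit.
  by apply/unitrP; exists (S^-1 * A^T * S); split; last exact: mulmx1C.
have -> : A^-1 = S^-1 * A^T * S.
  by rewrite -[LHS]mul1r -VA mulrK.
by rewrite -[S in _ * S](invrK S) mxtrace_conj ?unitrV // mxtrace_tr.
Qed.

Lemma mxtrace_mul_delta (R : pzRingType) n (A : 'M[R]_n) a b :
  \tr (A *m delta_mx b a) = A a b.
Proof.
rewrite /mxtrace (bigD1 a) //= big1 ?addr0 => [|c nca]; rewrite mxE.
  rewrite (bigD1 b) //= big1 ?addr0 => [|x nxb]; rewrite mxE.
    by rewrite !eqxx mulr1.
  by rewrite (negbTE nxb) mulr0.
by apply: big1 => x _; rewrite mxE (negbTE nca) andbF mulr0.
Qed.

Lemma mxtrace_mulE (R : comPzRingType) n (A B : 'M[R]_n) :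
  \tr A * \tr B = \sum_a \sum_b \tr (A *m delta_mx a b *m B *m delta_mx b a).
Proof.
rewrite mulr_suml; apply: eq_bigr => a _; rewrite mulr_sumr; apply: eq_bigr => b _.
rewrite mxtrace_mul_delta -(@mul_delta_mx _ n 1 n 0) mulmxA -colE -mulmxA -rowE.
by rewrite mxE big_ord1 !mxE.
Qed.

Lemma cent_eigenvalue_scalar (F : fieldType) (gT : finGroupType)
    (G : {group gT}) n (rG : mx_representation F G n) (A : 'M[F]_n) a :
  mx_irreducible rG -> centgmx rG A -> eigenvalue A a -> A = a%:M.
Proof.
move=> irr_rG cGA /eigenvalueP[v vA nz_v]; apply/eqP; rewrite -subr_eq0.
apply: contraNT nz_v => nzA.
have cGAa : centgmx rG (A - a%:M).
  apply/centgmxP => x Gx; rewrite mulmxBl mulmxBr scalar_mxC.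
  by rewrite (centgmxP cGA).
have v0 : v *m (A - a%:M) = 0 by rewrite mulmxBr vA mul_mx_scalar subrr.
by rewrite -(mulmxK (mx_Schur irr_rG cGAa nzA) v) v0 mul0mx.
Qed.

Section AdjointAction.
Variables (F : fieldType) (gT : finGroupType) (G : {group gT}) (n : nat).
Variable rG : mx_representation F G n.+1.
Local Notation M := 'M[F]_n.+1.

Lemma ad_fixE (A B : M) : A \is a GRing.unit ->
  (A *m B *m invmx A == B) = (A * B == B * A).
Proof.
move=> A_unit; rewrite !mulmxE -[invmx A]/A^-1.
by apply/eqP/eqP => [AB | ->]; rewrite ?mulrK // -[in RHS]AB divrK.
Qed.

Lemma ad_is_idP (A : M) : A \is a GRing.unit ->
  reflect (forall y, y \in G -> A * rG y = rG y * A) (ad_is_id rG A).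
Proof.
move=> A_unit; apply: (iffP forall_inP) => cA y Gy; first by apply/eqP; rewrite -ad_fixE ?cA.
by rewrite ad_fixE ?cA.
Qed.

Lemma ad_centraliserE (A : M) : A \is a GRing.unit ->
  ad_centraliser rG A = [set y in G | A * rG y == rG y * A].
Proof. by move=> A_unit; apply/setP => y; rewrite !inE ad_fixE. Qed.

Lemma ad_centraliserX (A : M) e : A \is a GRing.unit ->
  ad_centraliser rG A \subset ad_centraliser rG (A ^+ e).
Proof.
move=> A_unit; rewrite !ad_centraliserE ?unitrX //; apply/subsetP => y.
by rewrite !inE => /andP[-> /eqP cAy]; apply/eqP/commr_sym/commrX/commr_sym.
Qed.

Lemma ad_order_is_dvd (A : M) p : (0 < p)%N ->
  (forall j, ad_is_id rG (A ^+ j) = (p %| j)%N) -> ad_order_is rG A p.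
Proof.
move=> p_gt0 adA; split=> //; split=> [|j j_gt0 lt_jp]; first by rewrite adA.
by rewrite adA gtnNdvd.
Qed.

End AdjointAction.

Section OddDegreeRealRepresentation.
Variables (R : rcfType) (gT : finGroupType) (G : {group gT}) (m : nat).
Variable rG : mx_representation R G m.+1.
Hypotheses (odd_deg : odd m.+1) (irr_rG : mx_irreducible rG).
Local Notation M := 'M[R]_m.+1.

Lemma repr_cent_scalar (A : M) :
  (forall y, y \in G -> A * rG y = rG y * A) -> exists a, A = a%:M.
Proof.
move=> cA; have [a Aa] := odd_dim_eigenvalue A odd_deg.
by exists a; apply: cent_eigenvalue_scalar irr_rG _ Aa; apply/centgmxP; apply: cA.
Qed.

Lemma sum_repr_conj (X : M) :
  \sum_(h in G) rG h * X * (rG h)^-1 = (\tr X *+ #|G| / m.+1%:R)%:M.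
Proof.
set Y := \sum_(h in G) _.
have cY y : y \in G -> Y * rG y = rG y * Y.
  move=> Gy; rewrite mulr_sumr mulr_suml (reindex_inj (mulgI y)) /=.
  apply: eq_big => [h | h]; rewrite groupMl // => Gh.
  by rewrite repr_mxMr // invrM ?repr_mx_unitr // !mulrA divrK ?repr_mx_unitr.
have [c Dc] := repr_cent_scalar cY.
have trY : \tr Y = \tr X *+ #|G|.
  rewrite raddf_sum /= (eq_bigr (fun _ => \tr X)) ?sumr_const // => h Gh.
  by rewrite mxtrace_conj ?repr_mx_unitr.
rewrite Dc; congr (_%:M); move: trY; rewrite Dc mxtrace_scalar => <-.
by rewrite -[c *+ _]mulr_natr mulfK // pnatr_eq0.
Qed.

(* Schur orthogonality, obtained by averaging the conjugated matrix units
   u E_ab u^-1 over G. *)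
Lemma sum_mxtrace_mul_mxtraceV (u : M) : u \is a GRing.unit ->
  \sum_(h in G) \tr (rG h * u) * \tr (rG h * u)^-1 = #|G|%:R.
Proof.
move=> u_unit; pose X a b := u *m delta_mx a b * u^-1.
have trX a : \tr (X a a) = 1.
  by rewrite mxtrace_conj // -[delta_mx a a]mul1mx mxtrace_mul_delta mxE eqxx.
have termE h : h \in G -> \tr (rG h * u) * \tr (rG h * u)^-1
    = \sum_a \sum_b \tr ((rG h * X a b * (rG h)^-1) *m delta_mx b a).
  move=> Gh; rewrite mxtrace_mulE; apply: eq_bigr => a _; apply: eq_bigr => b _.
  by rewrite invrM ?repr_mx_unitr // !mulmxE !mulrA.
have sumE a b : \sum_(h in G) \tr ((rG h * X a b * (rG h)^-1) *m delta_mx b a)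
    = (\tr (X a b) *+ #|G| / m.+1%:R) *+ (a == b).
  by rewrite -raddf_sum -mulmx_suml sum_repr_conj /= mxtrace_mul_delta mxE.
rewrite (eq_bigr _ termE) exchange_big (eq_bigr (fun _ => #|G|%:R / m.+1%:R)).
  by rewrite sumr_const card_ord -[(_ / _) *+ _]mulr_natr divfK // pnatr_eq0.
move=> a _; rewrite exchange_big (bigD1 a) //= [X in _ + X]big1 => [|b nba].
  by rewrite sumE eqxx trX addr0.
by rewrite sumE eq_sym (negbTE nba).
Qed.

Section NormalisingElement.
Variable u : M.
Hypothesis u_unit : u \is a GRing.unit.
Hypothesis u_norm : forall y, y \in G -> exists2 z, z \in G & u * rG y = rG z * u.
Hypothesis mxtraceV_u : forall h, h \in G -> \tr (rG h * u)^-1 = \tr (rG h * u).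

Definition conj_index y :=
  odflt 1%g [pick z in G | rG y * u * (rG y)^-1 == rG z * u].

Lemma conj_indexP y : y \in G ->
  conj_index y \in G /\ rG y * u * (rG y)^-1 = rG (conj_index y) * u.
Proof.
move=> Gy; rewrite /conj_index; case: pickP => [z /andP[Gz /eqP //] | no_z] /=.
have [z Gz Dz] := u_norm (groupVr Gy).
have Dyz : rG y * u * (rG y)^-1 = rG (y * z)%g * u.
  by rewrite repr_mxMr // -[RHS]mulrA -Dz repr_mxVr // mulrA.
by have := no_z (y * z)%g; rewrite groupM // Dyz eqxx.
Qed.

Lemma card_conj_index_fibre h :
  (#|[set y in G | conj_index y == h]| <= #|ad_centraliser rG u|)%N.
Proof.
have [-> | [y0]] := set_0Vmem [set y in G | conj_index y == h]; first by rewrite cards0.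
rewrite inE => /andP[Gy0 /eqP idx_y0].
apply: leq_trans (leq_imset_card (fun y => y0 * y)%g _); apply: subset_leq_card.
apply/subsetP => y; rewrite inE => /andP[Gy /eqP idx_y].
apply/imsetP; exists (y0^-1 * y)%g; last by rewrite mulKVg.
rewrite ad_centraliserE // inE groupM ?groupV //= repr_mxMr ?groupV // repr_mxVr //.
have [_ Dy] := conj_indexP Gy; have [_ Dy0] := conj_indexP Gy0.
rewrite idx_y -idx_y0 -Dy0 in Dy.
have Dyu : rG y * u = rG y0 * u * (rG y0)^-1 * rG y by rewrite -Dy divrK ?repr_mx_unitr.
by apply/eqP; rewrite -mulrA Dyu !mulrA mulVr ?repr_mx_unitr // mul1r.
Qed.

Lemma mxtrace_sqr_le_card_centraliser : \tr u ^+ 2 <= #|ad_centraliser rG u|%:R.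
Proof.
pose F (A : M) := \tr A * \tr A^-1.
have F_ge0 h : h \in G -> 0 <= F (rG h * u).
  by move=> Gh; rewrite /F mxtraceV_u // -expr2 sqr_ge0.
have F_conj y : y \in G -> F (rG y * u * (rG y)^-1) = \tr u ^+ 2.
  move=> Gy; have := mxtraceV_u (group1 G); rewrite repr_mx1 -[1%:M]/(1 : M) mul1r => trV.
  rewrite /F !invrM ?invrK ?unitrV ?repr_mx_unitr ?unitrMr ?repr_mx_unitr //.
  by rewrite mulrA !mxtrace_conj ?repr_mx_unitr // trV expr2.
have sum_conj : \sum_(y in G) F (rG y * u * (rG y)^-1) = #|G|%:R * \tr u ^+ 2.
  by rewrite (eq_bigr _ F_conj) sumr_const mulr_natl.
have sum_fibres : \sum_(y in G) F (rG y * u * (rG y)^-1)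
    = \sum_(h in G) #|[set y in G | conj_index y == h]|%:R * F (rG h * u).
  rewrite (eq_bigr (fun y => F (rG (conj_index y) * u))); last first.
    by move=> y Gy; case: (conj_indexP Gy) => _ ->.
  rewrite (partition_big conj_index (mem G)) => [|y Gy]; last by case: (conj_indexP Gy).
  apply: eq_bigr => h Gh; rewrite (eq_bigr (fun _ => F (rG h * u))); last first.
    by move=> y /andP[_ /eqP ->].
  by rewrite sumr_const mulr_natl; congr (_ *+ _); apply: eq_card => y; rewrite !inE.
have G_gt0 : 0 < #|G|%:R :> R by rewrite ltr0n cardG_gt0.
rewrite -(ler_pM2l G_gt0) -sum_conj sum_fibres.
rewrite -(sum_mxtrace_mul_mxtraceV u_unit) mulr_suml; apply: ler_sum => h Gh.
by rewrite mulrC; apply: ler_wpM2l; [exact: F_ge0 | rewrite ler_nat card_conj_index_fibre].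
Qed.
End NormalisingElement.

End OddDegreeRealRepresentation.

Section TwistedElement.
Variables (R : rcfType) (gT : finGroupType) (G : {group gT}) (m : nat).
Variable rG : mx_representation R G m.+1.
Hypotheses (odd_deg : odd m.+1) (irr_rG : mx_irreducible rG).
Variables (n : 'M[R]_m.+1) (g : gT) (k : nat).
Hypotheses (Gg : g \in G) (n_unit : n \in unitmx).
Hypothesis n_norm : forall y, y \in G ->
  exists2 z, z \in G & n *m rG y *m invmx n = rG z.
Hypothesis n_finite_order : exists2 e, (0 < e)%N & n ^+ e = 1%:M.
Hypothesis ad_order_k : ad_order_is rG (rG g *m n) k.
Hypothesis k_even : ~~ odd k.
Local Notation s := (rG g * n).

Let k_gt0 : (0 < k)%N := proj1 ad_order_k.

Lemma s_unit : s \is a GRing.unit.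
Proof. by rewrite unitrMr ?repr_mx_unitr. Qed.

Lemma sX_normalises i y : y \in G ->
  exists2 z, z \in G & s ^+ i * rG y = rG z * s ^+ i.
Proof.
elim: i y => [|i IHi] y Gy; first by exists y; rewrite ?expr0 ?mul1r ?mulr1.
have [z Gz Dz] := IHi y Gy; have [w Gw Dw] := n_norm Gz.
have nz : n * rG z = rG w * n by rewrite -Dw !mulmxE divrK.
exists (g * w * g^-1)%g; first by rewrite !groupM ?groupV.
rewrite exprS -mulrA Dz !mulrA -(mulrA (rG g)) nz.
by rewrite !repr_mxMr ?groupM ?groupV // repr_mxVr // !mulrA divrK ?repr_mx_unitr.
Qed.

Lemma s_exp_order : s ^+ k = 1.
Proof.
case: ad_order_k => _ [ad_k _].
have [a Da] := repr_cent_scalar odd_deg irr_rG (ad_is_idP _ (unitrX k s_unit) ad_k).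
have det_g2 : \det (rG g) ^+ 2 = 1.
  by apply: (det_sqr_finite_order (order_gt0 g)); rewrite -repr_mxX // expg_order repr_mx1.
have det_n2 : \det n ^+ 2 = 1.
  by have [e e_gt0 ne1] := n_finite_order; apply: det_sqr_finite_order e_gt0 ne1.
have det_s2 : \det s ^+ 2 = 1 by rewrite -mulmxE detM exprMn det_g2 det_n2 mulr1.
have : a ^+ m.+1 = 1.
  rewrite -det_scalar -Da detX -(odd_double_half k) (negbTE k_even) add0n -mul2n.
  by rewrite exprM det_s2 expr1n.
by move/(odd_real_unity_root odd_deg) => a1; rewrite Da a1.
Qed.

Lemma ad_is_id_sX j : ad_is_id rG (s ^+ j) = (k %| j)%N.
Proof.
case: ad_order_k => _ [_ ad_min]; rewrite -(expr_mod j s_exp_order) /dvdn.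
have [-> | jk_gt0] := posnP (j %% k); last first.
  by rewrite (negbTE (ad_min _ jk_gt0 (ltn_pmod _ k_gt0))).
by rewrite expr0; apply/ad_is_idP; rewrite ?unitr1 // => y _; rewrite mul1r mulr1.
Qed.

Let form : 'M[R]_m.+1 :=
  \sum_(j < k) \sum_(h in G) (rG h * s ^+ j)^T * (rG h * s ^+ j).

Lemma form_unit : form \is a GRing.unit.
Proof.
rewrite -[_ \is a _]/(form \in unitmx) /form pair_big /=.
have := gram_sum_unit (P := fun p : 'I_k * gT => p.2 \in G)
  (f := fun p => rG p.2 * s ^+ p.1) (i0 := (Ordinal k_gt0, 1%g)) (group1 G).
by rewrite /= repr_mx1 expr0 mulr1 unitmx1; apply.
Qed.

Lemma form_invariant_repr y : y \in G -> (rG y)^T * form * rG y = form.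
Proof.
move=> Gy; rewrite mulr_sumr mulr_suml; apply: eq_bigr => j _.
have [z Gz Dz] := sX_normalises j Gy.
rewrite mulr_sumr mulr_suml [RHS](reindex_inj (mulIg z)) /=.
apply: eq_big => [h | h Gh]; first by rewrite groupMr.
by rewrite gram_mulr -mulrA Dz repr_mxMr // -[rG h * rG z * _]mulrA.
Qed.

Lemma form_invariant_s : s^T * form * s = form.
Proof.
rewrite /form mulr_sumr mulr_suml.
transitivity (\sum_(j < k) \sum_(h in G) (rG h * s ^+ j.+1)^T * (rG h * s ^+ j.+1)).
  apply: eq_bigr => j _; rewrite mulr_sumr mulr_suml; apply: eq_bigr => h _.
  by rewrite gram_mulr -mulrA -exprSr.
have := s_exp_order; case: k k_gt0 => // k' _ sk1.
rewrite big_ord_recr big_ord_recl /= addrC; congr (_ + _).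
by apply: eq_bigr => h _; rewrite sk1 expr0.
Qed.

Lemma form_invariant h i : h \in G ->
  (rG h * s ^+ i)^T * form * (rG h * s ^+ i) = form.
Proof.
move=> Gh; have gram_conjM (A B X : 'M[R]_m.+1) :
    (A * B)^T * X * (A * B) = B^T * (A^T * X * A) * B.
  by rewrite -!mulmxE trmx_mul !mulmxA.
rewrite gram_conjM form_invariant_repr //.
elim: i => [|i IHi]; first by rewrite expr0 trmx1 mul1r mulr1.
by rewrite exprS gram_conjM form_invariant_s.
Qed.

Lemma mxtraceV_repr_sX h i : h \in G ->
  \tr (rG h * s ^+ i)^-1 = \tr (rG h * s ^+ i).
Proof. by move=> Gh; apply: form_invariant_mxtraceV form_unit (form_invariant i Gh). Qed.

Lemma mxtrace_sX_sqr_le i : \tr (s ^+ i) ^+ 2 <= #|ad_centraliser rG (s ^+ i)|%:R.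
Proof.
have := mxtrace_sqr_le_card_centraliser odd_deg irr_rG (unitrX i s_unit).
by apply=> [y | h]; [exact: sX_normalises | exact: mxtraceV_repr_sX].
Qed.

Hypothesis centraliser_bound : forall j p, prime p ->
  ad_order_is rG ((rG g *m n) ^+ j) p ->
  (k.-1)%:R * Num.sqrt (#|ad_centraliser rG ((rG g *m n) ^+ j)|%:R) < (m.+1)%:R :> R.

Lemma mxtrace_sX_lower_bound i : (0 < i < k)%N ->
  - (m.+1)%:R < (k.-1)%:R * \tr (s ^+ i).
Proof.
case/prime_order_multiple=> e [p [p_prime ord_ie]].
have ord_p : ad_order_is rG (s ^+ (i * e)) p.
  by apply: ad_order_is_dvd (prime_gt0 p_prime) _ => j; rewrite -exprM ad_is_id_sX.
set C := ad_centraliser rG (s ^+ (i * e)).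
have le_tr_C : - \tr (s ^+ i) <= Num.sqrt #|C|%:R.
  rewrite (le_trans (ler_norm _)) // normrN -sqrtr_sqr ler_sqrt ?ler0n //.
  rewrite (le_trans (mxtrace_sX_sqr_le i)) // ler_nat subset_leq_card //.
  by rewrite /C exprM ad_centraliserX ?unitrX ?s_unit.
have := centraliser_bound p_prime ord_p; rewrite -/C.
have := ler_wpM2l (ler0n R k.-1) le_tr_C; rewrite mulrN.
set c := (k.-1)%:R; set t := \tr _; set r := Num.sqrt _; lra.
Qed.

Lemma twisted_eigenvalue1 : eigenvalue s 1.
Proof.
apply: (sum_exp_eigenvalue1 s_exp_order); apply/negP => /eqP sum0.
have k_gt1 : (1 < k)%N by move: k_even k_gt0; case: k => [|[]].
have := sum_gt0_of_lower_bound (t := fun i => \tr (s ^+ i)) k_gt1.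
rewrite -raddf_sum /= sum0 mxtrace0 expr0 mxtrace1 ltxx.
by move/(_ mxtrace_sX_lower_bound).
Qed.
End TwistedElement.

Theorem proposition3 (R : realType) (gT : finGroupType) (G : {group gT})
    (d : nat) (rG : mx_representation R G d)
    (Hodd : odd d)
    (Hfaith : mx_faithful rG)
    (Hirr : mx_irreducible rG)
    (Hnontriv : exists2 y, y \in G & rG y != 1%:M)
    (HnegId : forall y, y \in G -> rG y != - 1%:M)
    (n : 'M[R]_d) (Hn_unit : n \in unitmx)
    (Hn_norm1 : forall y, y \in G ->
        exists2 z, z \in G & n *m rG y *m invmx n = rG z)
    (Hn_norm2 : forall z, z \in G ->
        exists2 y, y \in G & n *m rG y *m invmx n = rG z)
    (Hn_ord : exists2 k : nat, (0 < k)%N & n ^+ k = 1%:M)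
    (g : gT) (Hg : g \in G)
    (k : nat) (Hk : ad_order_is rG (rG g *m n) k)
    (Hk_even : ~~ odd k)
    (Hbound : forall (j p : nat), prime p ->
        ad_order_is rG ((rG g *m n) ^+ j) p ->
        (k.-1)%:R * Num.sqrt (#|ad_centraliser rG ((rG g *m n) ^+ j)|%:R)
          < (d%:R : R)) :
  exists2 h, h \in G & eigenvalue (rG h *m n) 1.
Proof.
case: d rG Hodd Hfaith Hirr Hnontriv HnegId n Hn_unit Hn_norm1 Hn_norm2 Hn_ord Hk Hbound
  => // m rG odd_deg _ irr_rG _ _ n n_unit n_norm _ n_ord ad_order_k bound.
exists g => //.
exact (twisted_eigenvalue1 odd_deg irr_rG Hg n_unit n_norm n_ord ad_order_k Hk_even bound).
Qed.
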